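(* Let $F$ be a field and let $R$ be an $F$-algebra generated (as an $F$-algebra) by two principally nilpotent elements $x,y$ such that $x+y$ is not nilpotent. Then $R$ is a local ring satisfying (NK), and its Jacobson radical satisfies $\mathcal J(R)=xR+yR=Rx+Ry$.
   Context: All rings are associative with unit. A right ideal is nil if all its elements are nilpotent. A ring satisfies the condition (NK) if it contains two nil right ideals whose sum is not nil. An element $a$ of a ring $R$ is principally nilpotent if $aR$ is a nil right ideal. A ring is local if it has a unique maximal right ideal. *)

From HB Require Import structures.
From mathcomp Require Import all_boot all_order all_algebra.
Set Implicit Arguments. Unset Strict Implicit. Unset Printing Implicit Defensive.
Import GRing.Theory.
Local Open Scope ring_scope.

Definition nilpotent_elt (R : nzRingType) (a : R) : Prop := exists n : nat, a ^+ n = 0.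

Definition right_ideal (R : nzRingType) (I : R -> Prop) : Prop :=
  [/\ I 0, (forall a b, I a -> I b -> I (a - b)) & (forall a r, I a -> I (a * r))].

Definition nil_set (R : nzRingType) (I : R -> Prop) : Prop :=
  forall a, I a -> nilpotent_elt a.

Definition nil_right_ideal (R : nzRingType) (I : R -> Prop) : Prop :=
  right_ideal I /\ nil_set I.

Definition sum_set (R : nzRingType) (I J : R -> Prop) : R -> Prop :=
  fun z => exists a b, [/\ I a, J b & z = a + b].

Definition NK (R : nzRingType) : Prop :=
  exists I J : R -> Prop,
    [/\ nil_right_ideal I, nil_right_ideal J & ~ nil_set (sum_set I J)].

Definition principally_nilpotent (R : nzRingType) (a : R) : Prop :=
  nil_right_ideal (fun z => exists r, z = a * r).

Definition maximal_right_ideal (R : nzRingType) (M : R -> Prop) : Prop :=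
  [/\ right_ideal M, ~ M 1 &
      forall N : R -> Prop, right_ideal N -> (forall z, M z -> N z) ->
        (forall z, N z <-> M z) \/ (forall z, N z)].

Definition local_ring (R : nzRingType) : Prop :=
  exists M : R -> Prop, maximal_right_ideal M /\
    forall N, maximal_right_ideal N -> forall z, N z <-> M z.

Definition jacobson (R : nzRingType) : R -> Prop :=
  fun z => forall M, maximal_right_ideal M -> M z.

Definition generated_by2 (F : fieldType) (R : algType F) (x y : R) : Prop :=
  forall P : R -> Prop,
    P 1 -> P x -> P y ->
    (forall a b, P a -> P b -> P (a + b)) ->
    (forall (k : F) a, P a -> P (k *: a)) ->
    (forall a b, P a -> P b -> P (a * b)) ->
    forall z, P z.

(* Every maximal right ideal M contains x and y: otherwise M + xR = R, so
   1 - x r lies in M for some r, and 1 - x r is a unit because x r is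
   nilpotent.  Hence M contains J = xR + yR.  Conversely J is a proper right
   ideal (1 = x r + y s would put the unit 1 - x r in the nil ideal yR), and
   since x, y generate R, every element is a scalar plus an element of J, so
   J has codimension one and is maximal.  Thus J is the unique maximal right
   ideal; the same decomposition relative to Rx + Ry shows Rx + Ry = xR + yR.
   The nil right ideals xR and yR witness (NK) because x + y is not nilpotent. *)
From HB Require Import structures.
From mathcomp Require Import all_boot all_order all_algebra.
From Stdlib Require Import Classical.
Set Implicit Arguments. Unset Strict Implicit. Unset Printing Implicit Defensive.
Import GRing.Theory.
Local Open Scope ring_scope.

Section Rings.
Variable R : nzRingType.
Implicit Types (a b z : R) (I M N : R -> Prop).

Lemma mulr_sub1_geom a n : a ^+ n = 0 -> (1 - a) * \sum_(i < n) a ^+ i = 1.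
Proof.
move=> an0; have := subrX1 a n; rewrite an0 sub0r => geom.
by rewrite -opprB mulNr -geom opprK.
Qed.

Lemma not_nilpotent1 : ~ nilpotent_elt (1 : R).
Proof. by case=> n; rewrite expr1n; apply/eqP; apply: oner_neq0. Qed.

Lemma right_idealD I a b : right_ideal I -> I a -> I b -> I (a + b).
Proof.
case=> I0 IB _ Ia Ib; have := IB a (0 - b) Ia (IB 0 b I0 Ib).
by rewrite sub0r opprK.
Qed.

Lemma right_ideal_eqT I : right_ideal I -> I 1 -> forall z, I z.
Proof. by case=> _ _ Imul I1 z; rewrite -(mul1r z); apply: Imul. Qed.

Lemma right_ideal1_sub_nilpotent I a :
  right_ideal I -> nilpotent_elt a -> I (1 - a) -> I 1.
Proof.
case=> _ _ Imul [n an0] Ia.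
by rewrite -(mulr_sub1_geom an0); apply: Imul.
Qed.

Lemma principally_nilpotentP a :
  principally_nilpotent a -> forall r, nilpotent_elt (a * r).
Proof. by case=> _ anil r; apply: anil; exists r. Qed.

Definition right_ideal2 a b : R -> Prop := fun z => exists r s, z = a * r + b * s.
Definition left_ideal2 a b : R -> Prop := fun z => exists r s, z = r * a + s * b.

Lemma right_ideal2_ideal a b : right_ideal (right_ideal2 a b).
Proof.
split.
- by exists 0, 0; rewrite !mulr0 addr0.
- move=> _ _ [r1 [s1 ->]] [r2 [s2 ->]]; exists (r1 - r2), (s1 - s2).
  by rewrite !mulrBr opprD addrACA.
- move=> _ t [r [s ->]]; exists (r * t), (s * t).
  by rewrite mulrDl !mulrA.
Qed.

Lemma maximal_right_ideal_principally_nilpotent M a :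
  maximal_right_ideal M -> principally_nilpotent a -> M a.
Proof.
case=> Mideal notM1 Mmax apn; have [M0 MB Mmul] := Mideal.
pose N z := exists m r, M m /\ z = m + a * r.
have Nideal : right_ideal N.
  split.
  - by exists 0, 0; rewrite mulr0 addr0.
  - move=> _ _ [m1 [r1 [Mm1 ->]]] [m2 [r2 [Mm2 ->]]].
    exists (m1 - m2), (r1 - r2).
    by split; [apply: MB | rewrite mulrBr opprD addrACA].
  - move=> _ t [m [r [Mm ->]]]; exists (m * t), (r * t).
    by split; [apply: Mmul | rewrite mulrDl mulrA].
have MN z : M z -> N z by exists z, 0; rewrite mulr0 addr0.
case: (Mmax N Nideal MN) => [NM | NT].
  by apply/NM; exists 0, 1; rewrite mulr1 add0r.
have [m [r [Mm E1]]] := NT 1.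
have m_def : m = 1 - a * r by rewrite E1 addrK.
case: notM1; apply: (right_ideal1_sub_nilpotent Mideal (principally_nilpotentP apn r)).
by rewrite -m_def.
Qed.

Lemma right_ideal2_sub_maximal M a b :
  maximal_right_ideal M -> principally_nilpotent a -> principally_nilpotent b ->
  forall z, right_ideal2 a b z -> M z.
Proof.
move=> Mmax apn bpn _ [r [s ->]]; have [Mideal _ _] := Mmax.
have [_ _ Mmul] := Mideal.
by apply: right_idealD Mideal _ _; apply: Mmul;
  apply: maximal_right_ideal_principally_nilpotent.
Qed.

(* If 1 = a r + b s, then b s = 1 - a r lies in the nil right ideal bR. *)
Lemma right_ideal2_neq1 a b :
  principally_nilpotent a -> principally_nilpotent b -> ~ right_ideal2 a b 1.
Proof.
move=> apn [bideal bnil] [r [s E1]]; apply: not_nilpotent1; apply: bnil.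
apply: (right_ideal1_sub_nilpotent bideal (principally_nilpotentP apn r)).
by exists s; rewrite E1 addrAC subrr add0r.
Qed.

Lemma maximal_right_ideal_least I :
  maximal_right_ideal I ->
  (forall M, maximal_right_ideal M -> forall z, I z -> M z) ->
  local_ring R /\ (forall z, jacobson z <-> I z).
Proof.
move=> Imax Ileast; split.
  exists I; split=> // N Nmax; have [Nideal notN1 _] := Nmax.
  have [_ _ IN] := Imax; case: (IN N Nideal (Ileast N Nmax)) => [// | NT].
  by case: notN1; apply: NT.
by move=> z; split=> [|Iz M Mmax]; [apply | apply: Ileast].
Qed.

Lemma NK_principally_nilpotent a b :
  principally_nilpotent a -> principally_nilpotent b -> ~ nilpotent_elt (a + b) ->
  NK R.
Proof.
move=> apn bpn abnil; exists (fun z => exists r, z = a * r), (fun z => exists r, z = b * r).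
split=> // sumnil; apply: abnil; apply: sumnil.
by exists a, b; split=> //; exists 1; rewrite mulr1.
Qed.

End Rings.

Section Algebras.
Variables (F : fieldType) (R : algType F).
Implicit Types (z : R) (J : R -> Prop).

Definition scalar_plus J z := exists (k : F) j, J j /\ z = k *: 1 + j.

Lemma generated_by2_scalar_plus x y J :
  generated_by2 x y ->
  (forall a b, J a -> J b -> J (a + b)) -> (forall (k : F) a, J a -> J (k *: a)) ->
  (forall a b, J a -> J b -> J (a * b)) -> J x -> J y ->
  forall z, scalar_plus J z.
Proof.
move=> gen JD JZ JM Jx Jy; have J0 : J 0 by rewrite -(scale0r x); apply: JZ.
apply: gen.
- by exists 1, 0; rewrite scale1r addr0.
- by exists 0, x; rewrite scale0r add0r.
- by exists 0, y; rewrite scale0r add0r.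
- move=> _ _ [k1 [j1 [Jj1 ->]]] [k2 [j2 [Jj2 ->]]]; exists (k1 + k2), (j1 + j2).
  by split; [apply: JD | rewrite scalerDl addrACA].
- move=> k _ [k1 [j1 [Jj1 ->]]]; exists (k * k1), (k *: j1).
  by split; [apply: JZ | rewrite scalerDr scalerA].
- move=> _ _ [k1 [j1 [Jj1 ->]]] [k2 [j2 [Jj2 ->]]].
  exists (k1 * k2), (k1 *: j2 + k2 *: j1 + j1 * j2); split.
    exact: JD (JD _ _ (JZ _ _ Jj2) (JZ _ _ Jj1)) (JM _ _ Jj1 Jj2).
  rewrite mulrDl !mulrDr -!scalerAl !mul1r -!scalerAr !mulr1 scalerA.
  by rewrite -!addrA; congr (_ + _); rewrite addrCA.
Qed.

(* A proper right ideal of codimension one is maximal: any larger right ideal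
   contains a nonzero scalar, hence 1. *)
Lemma maximal_right_ideal_scalar_plus J :
  right_ideal J -> ~ J 1 -> (forall z, scalar_plus J z) -> maximal_right_ideal J.
Proof.
move=> Jideal notJ1 Jcodim1; split=> // N Nideal JN.
case: (classic (exists z, N z /\ ~ J z)) => [[z [Nz notJz]] | NJ]; last first.
  left=> z; split=> [Nz | /JN //]; apply: NNPP => notJz.
  by apply: NJ; exists z.
right.
have [k [j [Jj z_def]]] := Jcodim1 z.
have k_neq0 : k != 0 by apply: contra_notN notJz => /eqP k0; rewrite z_def k0 scale0r add0r.
have Nk : N (k *: 1).
  by have [_ NB _] := Nideal; rewrite -(addrK j (k *: 1)) -z_def; apply: NB; auto.
apply: right_ideal_eqT => //; have [_ _ Nmul] := Nideal.
have -> : (1 : R) = k *: 1 * (k^-1 *: 1).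
  by rewrite -scalerAl mul1r scalerA divff // scale1r.
exact: Nmul.
Qed.

Section Generators.
Variables x y : R.

Lemma right_ideal2_l : right_ideal2 x y x.
Proof. by exists 1, 0; rewrite mulr1 mulr0 addr0. Qed.

Lemma right_ideal2_r : right_ideal2 x y y.
Proof. by exists 0, 1; rewrite mulr1 mulr0 add0r. Qed.

Lemma left_ideal2_l : left_ideal2 x y x.
Proof. by exists 1, 0; rewrite mul1r mul0r addr0. Qed.

Lemma left_ideal2_r : left_ideal2 x y y.
Proof. by exists 0, 1; rewrite mul1r mul0r add0r. Qed.

Lemma right_ideal2D a b : right_ideal2 x y a -> right_ideal2 x y b -> right_ideal2 x y (a + b).
Proof. exact: right_idealD (right_ideal2_ideal x y). Qed.

Lemma right_ideal2M a b : right_ideal2 x y a -> right_ideal2 x y (a * b).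
Proof. by have [_ _] := right_ideal2_ideal x y; apply. Qed.

Lemma right_ideal2Z (k : F) a : right_ideal2 x y a -> right_ideal2 x y (k *: a).
Proof. by move=> [r [s ->]]; exists (k *: r), (k *: s); rewrite scalerDr !scalerAr. Qed.

Lemma left_ideal2D a b : left_ideal2 x y a -> left_ideal2 x y b -> left_ideal2 x y (a + b).
Proof.
move=> [r1 [s1 ->]] [r2 [s2 ->]]; exists (r1 + r2), (s1 + s2).
by rewrite !mulrDl addrACA.
Qed.

Lemma left_ideal2M a b : left_ideal2 x y b -> left_ideal2 x y (a * b).
Proof. by move=> [r [s ->]]; exists (a * r), (a * s); rewrite mulrDr !mulrA. Qed.

Lemma left_ideal2Z (k : F) a : left_ideal2 x y a -> left_ideal2 x y (k *: a).
Proof. by move=> [r [s ->]]; exists (k *: r), (k *: s); rewrite scalerDr !scalerAl. Qed.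

Hypothesis gen : generated_by2 x y.

Lemma right_ideal2_scalar_plus z : scalar_plus (right_ideal2 x y) z.
Proof.
apply: (generated_by2_scalar_plus gen); last 2 first.
- exact: right_ideal2_l.
- exact: right_ideal2_r.
- exact: right_ideal2D.
- exact: right_ideal2Z.
- by move=> a b Ja _; apply: right_ideal2M.
Qed.

Lemma left_ideal2_scalar_plus z : scalar_plus (left_ideal2 x y) z.
Proof.
apply: (generated_by2_scalar_plus gen); last 2 first.
- exact: left_ideal2_l.
- exact: left_ideal2_r.
- exact: left_ideal2D.
- exact: left_ideal2Z.
- by move=> a b _; apply: left_ideal2M.
Qed.

Lemma right_ideal2_sub_left_ideal2 z : right_ideal2 x y z -> left_ideal2 x y z.
Proof.
have mulJl c a : left_ideal2 x y c -> left_ideal2 x y (c * a).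
  move=> Jc; have [k [j [Jj ->]]] := left_ideal2_scalar_plus a.
  rewrite mulrDr -scalerAr mulr1.
  by apply: left_ideal2D; [apply: left_ideal2Z | apply: left_ideal2M].
move=> [r [s ->]].
by apply: left_ideal2D; apply: mulJl; [apply: left_ideal2_l | apply: left_ideal2_r].
Qed.

Lemma left_ideal2_sub_right_ideal2 z : left_ideal2 x y z -> right_ideal2 x y z.
Proof.
have mulJr a c : right_ideal2 x y c -> right_ideal2 x y (a * c).
  move=> Jc; have [k [j [Jj ->]]] := right_ideal2_scalar_plus a.
  rewrite mulrDl -scalerAl mul1r.
  by apply: right_ideal2D; [apply: right_ideal2Z | apply: right_ideal2M].
move=> [r [s ->]].
by apply: right_ideal2D; apply: mulJr; [apply: right_ideal2_l | apply: right_ideal2_r].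
Qed.

End Generators.
End Algebras.

Theorem mainTheorem5 (F : fieldType) (R : algType F) (x y : R) :
  generated_by2 x y ->
  principally_nilpotent x -> principally_nilpotent y ->
  ~ nilpotent_elt (x + y) ->
  [/\ local_ring R, NK R,
      (forall z, jacobson z <-> exists r s, z = x * r + y * s) &
      (forall z, jacobson z <-> exists r s, z = r * x + s * y)].
Proof.
move=> gen xpn ypn xynil.
have Jmax : maximal_right_ideal (right_ideal2 x y).
  apply: maximal_right_ideal_scalar_plus.
  - exact: right_ideal2_ideal.
  - exact: right_ideal2_neq1.
  - exact: right_ideal2_scalar_plus.
have [Rlocal jacE] : local_ring R /\ (forall z, jacobson z <-> right_ideal2 x y z).
  apply: maximal_right_ideal_least Jmax _ => M Mmax.
  exact: right_ideal2_sub_maximal.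
split=> //; first exact: (NK_principally_nilpotent xpn ypn xynil).
move=> z; rewrite (jacE z); split.
  exact: right_ideal2_sub_left_ideal2.
exact: left_ideal2_sub_right_ideal2.
Qed.
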